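(* Consider the setting described in the context, with value functions $U^o_t$, $t=0,\dots,T$. For every bound $B>0$ there exists a constant $K>0$ such that for all $t=0,\dots,T$ and all symmetric positive semidefinite $P,Q\in\mathbb{R}^{n\times n}$ with $\|P\|_F\le B$ and $\|Q\|_F\le B$, $$|U^o_t(P)-U^o_t(Q)|\le K\|P-Q\|_F.$$
   Context: Fix $T\in\mathbb{N}$, matrices $A_0,\dots,A_T\in\mathbb{R}^{n\times n}$, a symmetric positive definite $\mathcal W\in\mathbb{R}^{n\times n}$, and $N$ sensors: for $i\in\{1,\dots,N\}$ and $t=0,\dots,T$, matrices $C^i_t\in\mathbb{R}^{m_i\times n}$ and symmetric positive definite $\mathcal V^i\in\mathbb{R}^{m_i\times m_i}$. Let $R^i_t={C^i_t}^{\mathsf T}(\mathcal V^i)^{-1}C^i_t$ and $h_t(M)=A_{t-1}MA_{t-1}^{\mathsf T}+\mathcal W$. For a symmetric positive semidefinite $M$ and a positive semidefinite $R$ define the measurement update $\Phi(R,M)=M(I+RM)^{-1}$ (which equals $(M^{-1}+R)^{-1}$ when $M$ is invertible). For a relaxed schedule $\theta=\{\theta_k\}_{k=t}^T$ with each $\theta_k=(\theta^1_k,\dots,\theta^N_k)$ in the probability simplex ($\theta^i_k\in[0,1]$, $\sum_i\theta^i_k=1$), and initial prediction covariance $P_{t|t-1}=P$, define recursively $P_k=\Phi\big(\sum_{i=1}^N\theta^i_kR^i_k,\,P_{k|k-1}\big)$ and $P_{k+1|k}=h_{k+1}(P_k)$ for $k=t,\dots,T$. The relaxed value function is $U^o_t(P)=\min_{\theta}\sum_{k=t}^T\mathrm{tr}(P_k)$,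 the minimum over all such relaxed schedules from time $t$ to $T$. $\|\cdot\|_F$ is the Frobenius norm. *)

From HB Require Import structures.
From mathcomp Require Import all_boot all_order all_algebra.
From mathcomp Require Import classical_sets reals.
Set Implicit Arguments. Unset Strict Implicit. Unset Printing Implicit Defensive.
Import Order.TTheory GRing.Theory Num.Theory.
Local Open Scope ring_scope.
Local Open Scope classical_set_scope.

Section Defs.
Variable R : realType.

Definition psd n (M : 'M[R]_n) : Prop :=
  M^T = M /\ forall x : 'cV[R]_n, 0 <= (x^T *m M *m x) 0 0.

Definition posdef n (M : 'M[R]_n) : Prop :=
  M^T = M /\ forall x : 'cV[R]_n, x != 0 -> 0 < (x^T *m M *m x) 0 0.

Definition frob m n (M : 'M[R]_(m, n)) : R :=
  Num.sqrt (\sum_(i < m) \sum_(j < n) M i j ^+ 2).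

Definition Phi n (Rm M : 'M[R]_n) : 'M[R]_n := M *m invmx (1%:M + Rm *m M).

Definition Rmat n N (m : 'I_N -> nat) (C : forall i : 'I_N, nat -> 'M[R]_(m i, n))
  (V : forall i : 'I_N, 'M[R]_(m i)) (i : 'I_N) (t : nat) : 'M[R]_n :=
  (C i t)^T *m invmx (V i) *m C i t.

Definition hmap n (A : nat -> 'M[R]_n) (W : 'M[R]_n) (t : nat) (M : 'M[R]_n) :=
  A t.-1 *m M *m (A t.-1)^T + W.

Definition relaxed_schedule N (t T : nat) (theta : nat -> 'I_N -> R) : Prop :=
  forall k, (t <= k <= T)%N ->
    (forall i, 0 <= theta k i <= 1) /\ \sum_(i < N) theta k i = 1.

(* cost over s remaining steps starting at time k with prediction covariance M:
   sum of tr(P_j) for j = k .. k+s-1 *)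
Fixpoint relaxed_cost n N (m : 'I_N -> nat) (A : nat -> 'M[R]_n) (W : 'M[R]_n)
  (C : forall i : 'I_N, nat -> 'M[R]_(m i, n)) (V : forall i : 'I_N, 'M[R]_(m i))
  (theta : nat -> 'I_N -> R) (s k : nat) (M : 'M[R]_n) : R :=
  match s with
  | 0 => 0
  | s'.+1 =>
      let Pk := Phi (\sum_(i < N) theta k i *: Rmat C V i k) M in
      \tr Pk + relaxed_cost A W C V theta s' k.+1 (hmap A W k.+1 Pk)
  end.

(* relaxed value function U^o_t(P) (minimum realized as infimum) *)
Definition Uo n N (m : 'I_N -> nat) (A : nat -> 'M[R]_n) (W : 'M[R]_n)
  (C : forall i : 'I_N, nat -> 'M[R]_(m i, n)) (V : forall i : 'I_N, 'M[R]_(m i))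
  (T t : nat) (P : 'M[R]_n) : R :=
  inf [set c | exists theta, relaxed_schedule t T theta /\
                 c = relaxed_cost A W C V theta (T.+1 - t) t P].
End Defs.

(* Measure matrices by the entrywise l1 norm |X|, which is submultiplicative and
   equivalent to the Frobenius norm.  For psd R and M the matrix G = 1 + R M is
   invertible, Phi(R, M) is psd and below M, hence |Phi(R, M)| <= n tr M <= n |M|,
   and G^-1 = 1 - R Phi(R, M) is bounded in terms of |R| and |M|.  The identity
     Phi(R, P) - Phi(R, Q) = G_P^-T (P - Q) G_Q^-1
   then makes one step P |-> h(Phi(R, P)) of the Riccati recursion Lipschitz on
   bounded psd sets, uniformly over relaxed schedules since the weights lie in
   [0, 1].  By induction on the horizon every relaxed cost is Lipschitz with a
   schedule-independent constant, and an infimum of uniformly Lipschitz functions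
   bounded from below is Lipschitz. *)

From HB Require Import structures.
From mathcomp Require Import all_boot all_order all_algebra.
From mathcomp Require Import classical_sets reals boolp ring lra.
Import Order.TTheory GRing.Theory Num.Theory.
Local Open Scope ring_scope.
Set Implicit Arguments. Unset Strict Implicit. Unset Printing Implicit Defensive.

Section EntrywiseNorm.
Variable R : numDomainType.

Definition mxnorm1 m p (M : 'M[R]_(m, p)) : R := \sum_i \sum_j `|M i j|.

Lemma mxnorm1_ge0 m p (M : 'M[R]_(m, p)) : 0 <= mxnorm1 M.
Proof. by apply: sumr_ge0 => i _; apply: sumr_ge0. Qed.

Lemma mxnorm1_row_le m p (M : 'M[R]_(m, p)) i : \sum_j `|M i j| <= mxnorm1 M.
Proof.
by rewrite /mxnorm1 (bigD1 i) //= lerDl; apply: sumr_ge0 => k _; apply: sumr_ge0.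
Qed.

Lemma ler_mxnorm1D m p (M M' : 'M[R]_(m, p)) :
  mxnorm1 (M + M') <= mxnorm1 M + mxnorm1 M'.
Proof.
rewrite /mxnorm1 -big_split; apply: ler_sum => i _.
by rewrite -big_split; apply: ler_sum => j _; rewrite mxE ler_normD.
Qed.

Lemma mxnorm1N m p (M : 'M[R]_(m, p)) : mxnorm1 (- M) = mxnorm1 M.
Proof. by apply: eq_bigr => i _; apply: eq_bigr => j _; rewrite mxE normrN. Qed.

Lemma mxnorm1Z m p (a : R) (M : 'M[R]_(m, p)) : mxnorm1 (a *: M) = `|a| * mxnorm1 M.
Proof.
rewrite /mxnorm1 mulr_sumr; apply: eq_bigr => i _; rewrite mulr_sumr.
by apply: eq_bigr => j _; rewrite mxE normrM.
Qed.

Lemma mxnorm1_tr m p (M : 'M[R]_(m, p)) : mxnorm1 M^T = mxnorm1 M.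
Proof.
by rewrite /mxnorm1 exchange_big; apply: eq_bigr => i _; apply: eq_bigr => j _; rewrite mxE.
Qed.

Lemma ler_mxnorm1M m p q (M : 'M[R]_(m, p)) (M' : 'M[R]_(p, q)) :
  mxnorm1 (M *m M') <= mxnorm1 M * mxnorm1 M'.
Proof.
rewrite /mxnorm1 mulr_suml; apply: ler_sum => i _.
apply: (@le_trans _ _ (\sum_j \sum_k `|M i k| * `|M' k j|)).
  apply: ler_sum => j _; rewrite mxE; apply: le_trans (ler_norm_sum _ _ _) _.
  by apply: ler_sum => k _; rewrite normrM.
rewrite exchange_big mulr_suml; apply: ler_sum => k _.
by rewrite -mulr_sumr ler_wpM2l // mxnorm1_row_le.
Qed.

Lemma ler_mxnorm1_sum m p I (r : seq I) (P : pred I) (F : I -> 'M[R]_(m, p)) :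
  mxnorm1 (\sum_(i <- r | P i) F i) <= \sum_(i <- r | P i) mxnorm1 (F i).
Proof.
elim/big_rec2: _ => [|i a M _ IH].
  by rewrite /mxnorm1 big1 // => i _; rewrite big1 // => j _; rewrite mxE normr0.
by apply: le_trans (ler_mxnorm1D _ _) _; rewrite lerD2l.
Qed.

Lemma mxnorm1_1 n : mxnorm1 (1%:M : 'M[R]_n) = n%:R.
Proof.
rewrite /mxnorm1 (eq_bigr (fun _ => 1)) ?sumr_const ?card_ord // => i _.
rewrite (bigD1 i) //= big1 => [|j /negbTE ji]; rewrite !mxE ?eqxx ?normr1 ?addr0 //.
by rewrite eq_sym ji normr0.
Qed.

Lemma norm_mxtrace_le n (M : 'M[R]_n) : `|\tr M| <= mxnorm1 M.
Proof.
apply: le_trans (ler_norm_sum _ _ _) _; apply: ler_sum => i _.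
by rewrite (bigD1 i) //= lerDl sumr_ge0.
Qed.

Lemma ler_mxnorm1_congr m p (B : 'M[R]_(m, p)) (X : 'M[R]_p) :
  mxnorm1 (B *m X *m B^T) <= mxnorm1 B * mxnorm1 X * mxnorm1 B.
Proof.
apply: le_trans (ler_mxnorm1M _ _) _; rewrite mxnorm1_tr ler_wpM2r ?mxnorm1_ge0 //.
exact: ler_mxnorm1M.
Qed.

End EntrywiseNorm.

Section Psd.
Variable R : realType.

Lemma entry_le_frob m p (M : 'M[R]_(m, p)) i j : `|M i j| <= frob M.
Proof.
rewrite /frob -sqrtr_sqr ler_wsqrtr // (bigD1 i) //= (bigD1 j) //= -addrA lerDl.
rewrite addr_ge0 ?sumr_ge0 // => k _; first exact: sqr_ge0.
by rewrite sumr_ge0 // => l _; apply: sqr_ge0.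
Qed.

Lemma mxnorm1_le_frob m p (M : 'M[R]_(m, p)) : mxnorm1 M <= (m * p)%:R * frob M.
Proof.
apply: (@le_trans _ _ (\sum_(i < m) \sum_(j < p) frob M)).
  by apply: ler_sum => i _; apply: ler_sum => j _; apply: entry_le_frob.
by rewrite !sumr_const !card_ord -mulrnA mulr_natl mulnC.
Qed.

Definition bilin n (X : 'M[R]_n) (u v : 'cV[R]_n) : R := (u^T *m X *m v) 0 0.

Lemma bilinC n (X : 'M[R]_n) u v : X^T = X -> bilin X u v = bilin X v u.
Proof.
move=> sX; rewrite /bilin -[in LHS](trmxK (u^T *m X *m v)) mxE.
by rewrite !trmx_mul trmxK sX mulmxA.
Qed.

Lemma bilin_delta n (X : 'M[R]_n) i j : bilin X (delta_mx i 0) (delta_mx j 0) = X i j.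
Proof. by rewrite /bilin trmx_delta -rowE -colE !mxE. Qed.

Lemma bilin_expand n (X : 'M[R]_n) u v a : X^T = X ->
  bilin X (u + a *: v) (u + a *: v) =
  bilin X u u + a ^+ 2 * bilin X v v + 2 * a * bilin X u v.
Proof.
move=> sX; have vu : v^T *m X *m u = (u^T *m X *m v)^T.
  by rewrite !trmx_mul trmxK sX mulmxA.
rewrite /bilin !linearD /= !mulmxDl !linearZ /= -!scalemxAl !scalemxAr.
rewrite -!scalemxAr scalerA vu.
set uu := u^T *m X *m u; set uv := u^T *m X *m v; set vv := v^T *m X *m v.
by rewrite !mxE; ring.
Qed.

Lemma psd_diag_ge0 n (X : 'M[R]_n) i : psd X -> 0 <= X i i.
Proof. by case=> _ X_ge0; rewrite -bilin_delta; apply: X_ge0. Qed.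

Lemma psd_offdiag n (X : 'M[R]_n) i j : psd X -> 2 * `|X i j| <= X i i + X j j.
Proof.
case=> sX X_ge0; have := X_ge0 (delta_mx i 0 + 1 *: delta_mx j 0).
have := X_ge0 (delta_mx i 0 + (-1) *: delta_mx j 0).
rewrite -!/(bilin _ _ _) !bilin_expand // !bilin_delta.
by case: (lerP 0 (X i j)) => h; [rewrite ger0_norm | rewrite ltr0_norm]; lra.
Qed.

Lemma psd_mxtrace_ge0 n (X : 'M[R]_n) : psd X -> 0 <= \tr X.
Proof. by move=> psdX; apply: sumr_ge0 => i _; apply: psd_diag_ge0. Qed.

(* Summing the bound [2 |X i j| <= X i i + X j j] over all [i, j]. *)
Lemma mxnorm1_psd n (X : 'M[R]_n) : psd X -> mxnorm1 X <= n%:R * \tr X.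
Proof.
move=> psdX.
have : 2 * mxnorm1 X <= \sum_i \sum_j (X i i + X j j).
  rewrite mulr_sumr; apply: ler_sum => i _; rewrite mulr_sumr.
  by apply: ler_sum => j _; apply: psd_offdiag.
have -> : \sum_i \sum_j (X i i + X j j) = 2 * (n%:R * \tr X).
  under eq_bigr do rewrite big_split /= sumr_const card_ord.
  rewrite big_split /= sumr_const card_ord sumrMnl -/(mxtrace X) -mulr_natr.
  by rewrite -mulr2n mulr_natl; ring.
by rewrite ler_pM2l.
Qed.

Lemma psd_mxtrace_le n (X Y : 'M[R]_n) : psd (Y - X) -> \tr X <= \tr Y.
Proof. by move=> /psd_mxtrace_ge0; rewrite raddfB subr_ge0. Qed.

Lemma quadratic_ge0_eq0 (a q : R) : 0 <= q ->
  (forall t, 0 <= t ^+ 2 * q + 2 * t * a) -> a = 0.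
Proof.
move=> q_ge0 /(_ (- a / (q + 1))).
have q1_gt0 : 0 < q + 1 by lra.
have -> : (- a / (q + 1)) ^+ 2 * q + 2 * (- a / (q + 1)) * a
    = - (a ^+ 2 * (q + 2)) / (q + 1) ^+ 2 by field; rewrite gt_eqF.
rewrite pmulr_lge0 ?invr_gt0 ?exprn_gt0 // oppr_ge0 => ?; nra.
Qed.

Lemma cV_norm2_eq0 n (v : 'cV[R]_n) : (v^T *m v) 0 0 = 0 -> v = 0.
Proof.
rewrite mxE => /psumr_eq0P v0; apply/matrixP => i j; rewrite ord1 !mxE.
apply/eqP; rewrite -sqrf_eq0 expr2; apply/eqP.
by have := v0 _ i isT; rewrite mxE; apply=> k _; rewrite mxE -expr2 sqr_ge0.
Qed.

(* [t |-> q(x + t X x)] is nonnegative with no constant term, so its linear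
   coefficient [|X x|^2] vanishes. *)
Lemma psd_kernel n (X : 'M[R]_n) x : psd X -> bilin X x x = 0 -> X *m x = 0.
Proof.
move=> [sX X_ge0] qx0; apply: cV_norm2_eq0.
apply: (quadratic_ge0_eq0 (X_ge0 (X *m x))) => t.
have := X_ge0 (x + t *: (X *m x)); rewrite -/(bilin _ _ _) bilin_expand // qx0.
have -> : bilin X x (X *m x) = ((X *m x)^T *m (X *m x)) 0 0.
  by rewrite /bilin trmx_mul sX mulmxA.
by rewrite add0r.
Qed.

Lemma psd0 n : psd (0 : 'M[R]_n).
Proof. by split=> [|x]; rewrite ?trmx0 // mulmx0 mul0mx mxE. Qed.

Lemma psdD n (X Y : 'M[R]_n) : psd X -> psd Y -> psd (X + Y).
Proof.
move=> [sX X_ge0] [sY Y_ge0]; split; first by rewrite linearD /= sX sY.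
by move=> x; rewrite mulmxDr mulmxDl mxE addr_ge0.
Qed.

Lemma psdZ n a (X : 'M[R]_n) : 0 <= a -> psd X -> psd (a *: X).
Proof.
move=> a_ge0 [sX X_ge0]; split; first by rewrite linearZ /= sX.
by move=> x; rewrite -scalemxAr -scalemxAl mxE mulr_ge0.
Qed.

Lemma psd_sum n I (r : seq I) (P : pred I) (F : I -> 'M[R]_n) :
  (forall i, P i -> psd (F i)) -> psd (\sum_(i <- r | P i) F i).
Proof. by move=> psdF; elim/big_ind: _ => //; [apply: psd0 | apply: psdD]. Qed.

Lemma psd_congr n p (B : 'M[R]_(n, p)) (X : 'M[R]_p) : psd X -> psd (B *m X *m B^T).
Proof.
move=> [sX X_ge0]; split; first by rewrite !trmx_mul trmxK sX mulmxA.
by move=> x; have := X_ge0 (B^T *m x); rewrite trmx_mul trmxK !mulmxA.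
Qed.

Lemma posdef_psd n (X : 'M[R]_n) : posdef X -> psd X.
Proof.
move=> [sX X_gt0]; split=> // x; have [->|/X_gt0/ltW //] := eqVneq x 0.
by rewrite mulmx0 mxE.
Qed.

Lemma psd_invmx n (X : 'M[R]_n) : psd X -> psd (invmx X).
Proof.
move=> [sX X_ge0]; have [uX|nuX] := boolP (X \in unitmx); last first.
  by rewrite /invmx (negbTE nuX).
have sXV : (invmx X)^T = invmx X by rewrite trmx_inv sX.
by split=> // x; have := X_ge0 (invmx X *m x); rewrite trmx_mul sXV !mulmxA mulmxKV.
Qed.

End Psd.

Section MeasurementUpdate.
Variable R : realType.

(* [(1 + R M) x = 0] gives [x^T M x = - (M x)^T R (M x) <= 0], so [M x = 0] and [x = 0]. *)
Lemma unitmx_1DM_psd n (Rm M : 'M[R]_n) : psd Rm -> psd M -> 1%:M + Rm *m M \in unitmx.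
Proof.
move=> psdR psdM.
have ker0 (x : 'cV_n) : (1%:M + Rm *m M) *m x = 0 -> x = 0.
  rewrite mulmxDl mul1mx => /eqP; rewrite addr_eq0 -mulmxA => /eqP ex.
  have Mx0 : bilin M x x = 0.
    apply/eqP; rewrite eq_le; apply/andP; split; last by case: psdM => _; apply.
    have [sR R_ge0] := psdR; have [sM _] := psdM.
    rewrite /bilin {2}ex mulmxN mxE oppr_le0 !mulmxA.
    by have := R_ge0 (M *m x); rewrite trmx_mul sM !mulmxA.
  by rewrite ex (psd_kernel psdM Mx0) mulmx0 oppr0.
rewrite -unitmx_tr -row_free_unit; apply: inj_row_free => v vG0.
rewrite -[v]trmxK (ker0 v^T) ?trmx0 //.
by rewrite -[_ *m v^T]trmxK trmx_mul trmxK vG0 trmx0.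
Qed.

Variables (n : nat) (Rm M : 'M[R]_n).
Hypotheses (psdR : psd Rm) (psdM : psd M).

Let G := 1%:M + Rm *m M.
Let unitG : G \in unitmx := unitmx_1DM_psd psdR psdM.

Lemma trmx_1DM : G^T = 1%:M + M *m Rm.
Proof.
by case: psdR => sR _; case: psdM => sM _; rewrite linearD /= trmx1 trmx_mul sR sM.
Qed.

Lemma invmx_1DM : invmx G = 1%:M - Rm *m Phi Rm M.
Proof.
apply/eqP; rewrite eq_sym subr_eq /Phi -/G mulmxA -{1}[invmx G]mul1mx -mulmxDl.
by rewrite mulmxV.
Qed.

Lemma PhiE_tr : Phi Rm M = invmx G^T *m M.
Proof.
have unitGT : G^T \in unitmx by rewrite unitmx_tr.
have GM : G^T *m M = M *m G.
  by rewrite trmx_1DM /G mulmxDl mulmxDr mul1mx mulmx1 mulmxA.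
by rewrite /Phi -/G -[M *m _](mulKmx unitGT) [G^T *m _]mulmxA GM mulmxK.
Qed.

Lemma Phi_sym : (Phi Rm M)^T = Phi Rm M.
Proof. by case: psdM => sM _; rewrite {2}PhiE_tr /Phi trmx_mul trmx_inv sM. Qed.

(* [Phi = G^-T M G^-1 + Phi R Phi], because [G^-T = 1 - Phi R]. *)
Lemma psd_Phi : psd (Phi Rm M).
Proof.
have -> : Phi Rm M = (invmx G)^T *m M *m (invmx G)^T^T + Phi Rm M *m Rm *m (Phi Rm M)^T.
  rewrite trmxK Phi_sym trmx_inv -PhiE_tr invmx_1DM mulmxBr mulmx1 mulmxA.
  by rewrite subrK.
by apply: psdD; apply: psd_congr.
Qed.

Lemma psd_subr_Phi : psd (M - Phi Rm M).
Proof.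
have [sR _] := psdR; set P := Phi Rm M.
have MP : P + P *m Rm *m M = M.
  by rewrite -mulmxA -{1}[P]mulmx1 -mulmxDr /P /Phi -/G mulmxKV.
have PM : P + M *m Rm *m P = M.
  rewrite -{1}[P]mul1mx -mulmxDl -trmx_1DM /P PhiE_tr mulKVmx //.
  by rewrite unitmx_tr.
have -> : M - P = P *m Rm *m P^T + (P *m Rm) *m M *m (P *m Rm)^T.
  rewrite (trmx_mul P Rm) sR Phi_sym -/P.
  have -> : P *m Rm *m M *m (Rm *m P) = P *m Rm *m (M *m Rm *m P) by rewrite !mulmxA.
  by rewrite -mulmxDr PM -{1}MP addrC addKr.
by apply: psdD; apply: psd_congr.
Qed.

Lemma mxnorm1_Phi_le : mxnorm1 (Phi Rm M) <= n%:R * mxnorm1 M.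
Proof.
apply: le_trans (mxnorm1_psd psd_Phi) _; rewrite ler_wpM2l //.
apply: le_trans (psd_mxtrace_le psd_subr_Phi) _.
exact: le_trans (ler_norm _) (norm_mxtrace_le _).
Qed.

Lemma mxnorm1_invmx_1DM_le :
  mxnorm1 (invmx G) <= n%:R + mxnorm1 Rm * (n%:R * mxnorm1 M).
Proof.
rewrite invmx_1DM; apply: le_trans (ler_mxnorm1D _ _) _.
rewrite mxnorm1N mxnorm1_1 lerD2l; apply: le_trans (ler_mxnorm1M _ _) _.
by rewrite ler_wpM2l ?mxnorm1_ge0 // mxnorm1_Phi_le.
Qed.

End MeasurementUpdate.

Lemma PhiB (R : realType) n (Rm P Q : 'M[R]_n) : psd Rm -> psd P -> psd Q ->
  Phi Rm P - Phi Rm Q =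
  (invmx (1%:M + Rm *m P))^T *m (P - Q) *m invmx (1%:M + Rm *m Q).
Proof.
move=> psdR psdP psdQ.
have unitQ := unitmx_1DM_psd psdR psdQ.
have unitPT : (1%:M + Rm *m P)^T \in unitmx by rewrite unitmx_tr unitmx_1DM_psd.
have -> : P - Q = P *m (1%:M + Rm *m Q) - (1%:M + Rm *m P)^T *m Q.
  rewrite (trmx_1DM psdR psdP) mulmxDr mulmxDl mulmx1 mul1mx mulmxA opprD addrACA.
  by rewrite subrr addr0.
rewrite mulmxBr mulmxBl !mulmxA mulmxK // trmx_inv -(PhiE_tr psdR psdP).
by rewrite mulVmx // mul1mx.
Qed.

Lemma mxnorm1_PhiB_le (R : realType) n (Rm P Q : 'M[R]_n) (r b g : R) :
  psd Rm -> psd P -> psd Q -> mxnorm1 Rm <= r -> mxnorm1 P <= b -> mxnorm1 Q <= b ->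
  n%:R + r * (n%:R * b) <= g ->
  mxnorm1 (Phi Rm P - Phi Rm Q) <= g * mxnorm1 (P - Q) * g.
Proof.
move=> psdR psdP psdQ Rr Pb Qb rbg.
have invG_le X : psd X -> mxnorm1 X <= b -> mxnorm1 (invmx (1%:M + Rm *m X)) <= g.
  move=> psdX Xb.
  apply: le_trans (mxnorm1_invmx_1DM_le psdR psdX) (le_trans _ rbg).
  rewrite lerD2l ler_pM ?mxnorm1_ge0 ?mulr_ge0 ?mxnorm1_ge0 //.
  by rewrite ler_wpM2l.
rewrite PhiB //; apply: le_trans (ler_mxnorm1M _ _) _.
rewrite ler_pM ?mxnorm1_ge0 ?invG_le //; apply: le_trans (ler_mxnorm1M _ _) _.
by rewrite mxnorm1_tr ler_wpM2r ?mxnorm1_ge0 ?invG_le.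
Qed.

Lemma relaxed_schedule_S (R : realType) N k T (theta : nat -> 'I_N -> R) :
  relaxed_schedule k T theta -> relaxed_schedule k.+1 T theta.
Proof. by move=> sched j /andP[kj jT]; apply: sched; rewrite jT (ltnW kj). Qed.

Lemma hmapB (R : realType) n (A : nat -> 'M[R]_n) W k (X Y : 'M[R]_n) :
  hmap A W k X - hmap A W k Y = A k.-1 *m (X - Y) *m (A k.-1)^T.
Proof. by rewrite /hmap opprD addrACA subrr addr0 -mulmxBl -mulmxBr. Qed.

Section RelaxedCost.
Variable R : realType.
Variables (n N : nat) (m : 'I_N -> nat) (A : nat -> 'M[R]_n) (W : 'M[R]_n).
Variables (C : forall i : 'I_N, nat -> 'M[R]_(m i, n)) (V : forall i : 'I_N, 'M[R]_(m i)).
Hypotheses (psdW : psd W) (posdefV : forall i, posdef (V i)).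
Variable T : nat.

Local Notation cost := (relaxed_cost A W C V).

Definition sensor_info (theta : nat -> 'I_N -> R) k :=
  \sum_(i < N) theta k i *: Rmat C V i k.

Let alpha := \sum_(j < T.+1) mxnorm1 (A j).
Let rho := \sum_(j < T.+1) \sum_(i < N) mxnorm1 (Rmat C V i j).

Lemma alpha_ge0 : 0 <= alpha.
Proof. by apply: sumr_ge0 => j _; apply: mxnorm1_ge0. Qed.

Lemma rho_ge0 : 0 <= rho.
Proof. by apply: sumr_ge0 => j _; apply: sumr_ge0 => i _; apply: mxnorm1_ge0. Qed.

Lemma mxnorm1_A_le j : (j <= T)%N -> mxnorm1 (A j) <= alpha.
Proof.
move=> jT; rewrite /alpha (bigD1 (Ordinal (jT : j < T.+1)%N)) //= lerDl.
by apply: sumr_ge0 => k _; apply: mxnorm1_ge0.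
Qed.

Lemma psd_sensor_info theta k : (forall i, 0 <= theta k i) -> psd (sensor_info theta k).
Proof.
move=> theta_ge0; apply: psd_sum => i _; apply: psdZ => //.
by rewrite /Rmat -{2}(trmxK (C i k)); apply/psd_congr/psd_invmx/posdef_psd.
Qed.

Lemma mxnorm1_sensor_info_le theta k : (k <= T)%N ->
  (forall i, 0 <= theta k i <= 1) -> mxnorm1 (sensor_info theta k) <= rho.
Proof.
move=> kT theta01; apply: le_trans (ler_mxnorm1_sum _ _ _) _.
rewrite /rho (bigD1 (Ordinal (kT : k < T.+1)%N)) //= -[X in X <= _]addr0.
apply: lerD; last by apply: sumr_ge0 => j _; apply: sumr_ge0 => i _; apply: mxnorm1_ge0.
apply: ler_sum => i _; rewrite mxnorm1Z.
by have /andP[t0 t1] := theta01 i; rewrite ger0_norm // ler_piMl ?mxnorm1_ge0.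
Qed.

Lemma psd_hmap k X : psd X -> psd (hmap A W k X).
Proof. by move=> psdX; apply: psdD => //; apply: psd_congr. Qed.

Lemma mxnorm1_hmap_le k X : (k <= T)%N ->
  mxnorm1 (hmap A W k.+1 X) <= alpha * mxnorm1 X * alpha + mxnorm1 W.
Proof.
move=> kT; apply: le_trans (ler_mxnorm1D _ _) _; rewrite lerD2r.
apply: le_trans (ler_mxnorm1_congr _ _) _; have Ak := mxnorm1_A_le kT.
by rewrite ler_pM ?mulr_ge0 ?mxnorm1_ge0 // ler_wpM2r ?mxnorm1_ge0.
Qed.

Lemma relaxed_cost_ge0 s k theta M : (k + s <= T.+1)%N -> relaxed_schedule k T theta ->
  psd M -> 0 <= cost theta s k M.
Proof.
elim: s k M => [//|s IH] k M ks sched psdM /=.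
have kT : (k <= T)%N by rewrite -ltnS (leq_trans _ ks) // addnS ltnS leq_addr.
have [theta01 _] := sched k (introT andP (conj (leqnn k) kT)).
rewrite -/(sensor_info theta k).
have psdP : psd (Phi (sensor_info theta k) M).
  by apply: psd_Phi => //; apply: psd_sensor_info => i; have /andP[] := theta01 i.
rewrite addr_ge0 ?psd_mxtrace_ge0 // IH ?addSnnS //.
  exact: relaxed_schedule_S.
exact: psd_hmap.
Qed.

Definition relaxed_cost_lipschitz s b L := forall k theta,
  (k + s <= T.+1)%N -> relaxed_schedule k T theta ->
  forall P Q, psd P -> psd Q -> mxnorm1 P <= b -> mxnorm1 Q <= b ->
  `|cost theta s k P - cost theta s k Q| <= L * mxnorm1 (P - Q).

Lemma relaxed_cost_lipschitzW s b L L' :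
  L <= L' -> relaxed_cost_lipschitz s b L -> relaxed_cost_lipschitz s b L'.
Proof.
move=> LL' lipL k theta ks sched P Q psdP psdQ Pb Qb.
apply: le_trans (lipL k theta ks sched P Q psdP psdQ Pb Qb) _.
by rewrite ler_wpM2r ?mxnorm1_ge0.
Qed.

(* One step sends [b]-bounded psd matrices to [b']-bounded ones, with Lipschitz
   constant [g^2] for [Phi] and [alpha^2] for [hmap]. *)
Lemma exists_relaxed_cost_lipschitz s b : 0 <= b ->
  exists2 L, 0 <= L & relaxed_cost_lipschitz s b L.
Proof.
elim: s b => [|s IH] b b_ge0.
  by exists 0 => // k theta _ _ P Q *; rewrite /= subrr normr0 mul0r.
pose b' := alpha * (n%:R * b) * alpha + mxnorm1 W.
have b'_ge0 : 0 <= b' by rewrite addr_ge0 ?mxnorm1_ge0 // !mulr_ge0 ?alpha_ge0.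
have [L' L'_ge0 lipL'] := IH b' b'_ge0.
pose g := n%:R + rho * (n%:R * b).
have g_ge0 : 0 <= g by rewrite addr_ge0 // !mulr_ge0 ?rho_ge0.
exists ((1 + L' * (alpha * alpha)) * (g * g)).
  by rewrite !mulr_ge0 // addr_ge0 // !mulr_ge0 ?alpha_ge0.
move=> k theta ks sched P Q psdP psdQ Pb Qb /=; rewrite -/(sensor_info theta k).
have kT : (k <= T)%N by rewrite -ltnS (leq_trans _ ks) // addnS ltnS leq_addr.
have [theta01 _] := sched k (introT andP (conj (leqnn k) kT)).
have psdRk : psd (sensor_info theta k).
  by apply: psd_sensor_info => i; have /andP[] := theta01 i.
have Rk_le := mxnorm1_sensor_info_le kT theta01.
set PP := Phi _ P; set QQ := Phi _ Q.
have PPb : mxnorm1 PP <= n%:R * b.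
  by apply: le_trans (mxnorm1_Phi_le psdRk psdP) _; rewrite ler_wpM2l.
have QQb : mxnorm1 QQ <= n%:R * b.
  by apply: le_trans (mxnorm1_Phi_le psdRk psdQ) _; rewrite ler_wpM2l.
have hb X : mxnorm1 X <= n%:R * b -> mxnorm1 (hmap A W k.+1 X) <= b'.
  move=> Xb; apply: le_trans (mxnorm1_hmap_le X kT) _; rewrite lerD2r.
  by rewrite ler_wpM2r ?alpha_ge0 // ler_wpM2l ?alpha_ge0.
have ks' : (k.+1 + s <= T.+1)%N by rewrite addSnnS.
have := lipL' k.+1 theta ks' (relaxed_schedule_S sched) _ _
  (psd_hmap k.+1 (psd_Phi psdRk psdP)) (psd_hmap k.+1 (psd_Phi psdRk psdQ))
  (hb _ PPb) (hb _ QQb).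
rewrite -/PP -/QQ hmapB /= => lip_tail.
have dPQ : mxnorm1 (PP - QQ) <= g * mxnorm1 (P - Q) * g.
  exact: mxnorm1_PhiB_le psdRk psdP psdQ Rk_le Pb Qb (lexx g).
set d := mxnorm1 (PP - QQ) in dPQ lip_tail *.
set c1 := cost theta s k.+1 _ in lip_tail *; set c2 := cost theta s k.+1 _ in lip_tail *.
have -> : \tr PP + c1 - (\tr QQ + c2) = \tr (PP - QQ) + (c1 - c2) by rewrite raddfB /=; ring.
apply: le_trans (ler_normD _ _) _.
have dA : mxnorm1 (A k *m (PP - QQ) *m (A k)^T) <= alpha * d * alpha.
  apply: le_trans (ler_mxnorm1_congr _ _) _; have Ak := mxnorm1_A_le kT.
  by rewrite ler_pM ?mulr_ge0 ?mxnorm1_ge0 // ler_wpM2r ?mxnorm1_ge0.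
apply: le_trans (lerD (norm_mxtrace_le _) (le_trans lip_tail (ler_wpM2l L'_ge0 dA))) _.
have -> : d + L' * (alpha * d * alpha) = (1 + L' * (alpha * alpha)) * d by ring.
rewrite -mulrA ler_wpM2l ?addr_ge0 ?mulr_ge0 ?alpha_ge0 //.
by rewrite mulrAC.
Qed.

Lemma exists_uniform_relaxed_cost_lipschitz b S : 0 <= b ->
  exists2 L, 0 <= L & forall s, (s <= S)%N -> relaxed_cost_lipschitz s b L.
Proof.
move=> b_ge0; elim: S => [|S [L1 L1_ge0 lipL1]].
  have [L L_ge0 lipL] := exists_relaxed_cost_lipschitz 0 b_ge0.
  by exists L => // s; rewrite leqn0 => /eqP ->.
have [L2 L2_ge0 lipL2] := exists_relaxed_cost_lipschitz S.+1 b_ge0.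
exists (L1 + L2); first exact: addr_ge0.
move=> s; rewrite leq_eqVlt ltnS => /orP[/eqP ->|sS].
  by apply: relaxed_cost_lipschitzW lipL2; rewrite lerDr.
by apply: relaxed_cost_lipschitzW (lipL1 s sS); rewrite lerDl.
Qed.

End RelaxedCost.

Section Infimum.
Variable R : realType.
Local Open Scope classical_set_scope.

Lemma inf_le_infD (I : Type) (D : I -> Prop) (f g : I -> R) c d :
  (exists i, D i) -> (forall i, D i -> c <= f i) -> (forall i, D i -> f i <= g i + d) ->
  inf [set x | exists i, D i /\ x = f i] <= inf [set x | exists i, D i /\ x = g i] + d.
Proof.
move=> [i0 Di0] f_ge fg; rewrite -lerBlDr; apply: lb_le_inf.
  by exists (g i0), i0.
move=> _ [i [Di ->]]; rewrite lerBlDr; apply: le_trans (fg i Di).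
by apply: ge_inf; [exists c => _ [j [Dj ->]]; apply: f_ge | exists i].
Qed.

Lemma dist_inf_le (I : Type) (D : I -> Prop) (f g : I -> R) c d : 0 <= d ->
  (forall i, D i -> c <= f i) -> (forall i, D i -> `|f i - g i| <= d) ->
  `|inf [set x | exists i, D i /\ x = f i] - inf [set x | exists i, D i /\ x = g i]| <= d.
Proof.
move=> d_ge0 f_ge fg; have [neD|emptyD] := pselect (exists i, D i); last first.
  have E h : [set x | exists i, D i /\ x = h i] = set0.
    by apply/seteqP; split=> // x [i [Di _]]; apply: emptyD; exists i.
  by rewrite !E subrr normr0.
have [fg_le gf_le] :
    (forall i, D i -> f i <= g i + d) /\ (forall i, D i -> g i <= f i + d).
  by split=> i Di; have := fg i Di; rewrite ler_norml => /andP[]; lra.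
have g_ge i : D i -> c - d <= g i.
  by move=> Di; have := f_ge i Di; have := fg_le i Di; lra.
have := inf_le_infD neD f_ge fg_le; have := inf_le_infD neD g_ge gf_le.
by rewrite ler_norml; lra.
Qed.

End Infimum.

Theorem proposition4 (R : realType) (n N T : nat) (m : 'I_N -> nat)
  (A : nat -> 'M[R]_n) (W : 'M[R]_n)
  (C : forall i : 'I_N, nat -> 'M[R]_(m i, n)) (V : forall i : 'I_N, 'M[R]_(m i)) :
  posdef W -> (forall i, posdef (V i)) ->
  forall B : R, 0 < B ->
  exists K : R, 0 < K /\
    forall t : nat, (t <= T)%N ->
    forall P Q : 'M[R]_n, psd P -> psd Q -> frob P <= B -> frob Q <= B ->
      `|Uo A W C V T t P - Uo A W C V T t Q| <= K * frob (P - Q).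
Proof.
move=> /posdef_psd psdW posdefV B B_gt0.
pose b := (n * n)%:R * B.
have b_ge0 : 0 <= b by rewrite mulr_ge0 // ltW.
have [L L_ge0 lipL] :=
  exists_uniform_relaxed_cost_lipschitz A C psdW posdefV T T.+1 b_ge0.
exists ((n * n)%:R * L + 1); split; first by rewrite ltr_pwDr // mulr_ge0.
move=> t tT P Q psdP psdQ PB QB.
have frob_b (X : 'M_n) : frob X <= B -> mxnorm1 X <= b.
  by move=> XB; apply: le_trans (mxnorm1_le_frob X) _; rewrite ler_wpM2l.
have horizon : (t + (T.+1 - t) <= T.+1)%N by rewrite subnKC // ltnW.
have cost_ge0 theta : relaxed_schedule t T theta ->
    0 <= relaxed_cost A W C V theta (T.+1 - t) t P.
  by move=> sched; have := relaxed_cost_ge0 A C psdW posdefV horizon sched psdP.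
have cost_lip theta : relaxed_schedule t T theta ->
    `|relaxed_cost A W C V theta (T.+1 - t) t P
      - relaxed_cost A W C V theta (T.+1 - t) t Q| <= L * mxnorm1 (P - Q).
  move=> sched; apply: lipL (leq_subr _ _) _ _ horizon sched _ _ psdP psdQ _ _;
  exact: frob_b.
apply: le_trans (dist_inf_le _ cost_ge0 cost_lip) _.
  by rewrite mulr_ge0 ?mxnorm1_ge0.
apply: le_trans (ler_wpM2l L_ge0 (mxnorm1_le_frob (P - Q))) _.
by rewrite mulrA mulrDl mul1r [L * _]mulrC lerDl sqrtr_ge0.
Qed.
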